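(* If $w\in\Sigma^*$ is square-free, then every scattered factor $u$ of $w$ with $|E(w,u)|\ge2$ satisfies $|C(w,u)|>1$.
   Context: A word $w$ is square-free if it has no factor of the form $yy$ with $y$ a nonempty word. An embedding of $u$ in $w$ is a map $e:\{1,\dots,|u|\}\to\{1,\dots,|w|\}$ with $e(1)<\dots<e(|u|)$ and $u[i]=w[e(i)]$; $E(w,u)$ is the set of embeddings of $u$ in $w$. The shuffle $\mathrm{Sh}(u,v)$ is the set of words of length $|u|+|v|$ admitting an embedding of $u$ and one of $v$ with disjoint images covering all positions, and $C(w,u)=\{v\in\Sigma^{|w|-|u|}: w\in\mathrm{Sh}(u,v)\}$. *)

From mathcomp Require Import all_boot.
Set Implicit Arguments. Unset Strict Implicit. Unset Printing Implicit Defensive.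

Section Words.
Variable T : finType.

Definition square_free (w : seq T) : Prop :=
  forall (x y z : seq T), w = x ++ y ++ y ++ z -> y = [::].

Definition is_embedding (w u : seq T) (e : {ffun 'I_(size u) -> 'I_(size w)}) : bool :=
  [forall i : 'I_(size u), forall j : 'I_(size u), (i < j) ==> (e i < e j)] &&
  [forall i : 'I_(size u), nth None (map Some u) i == nth None (map Some w) (e i)].

Arguments is_embedding w u e : clear implicits.

Definition embeddings (w u : seq T) : {set {ffun 'I_(size u) -> 'I_(size w)}} :=
  [set e | is_embedding w u e].

Definition scattered_factor (u w : seq T) : Prop :=
  exists e : {ffun 'I_(size u) -> 'I_(size w)}, is_embedding w u e.

Definition in_shuffle (w u v : seq T) : bool :=
  (size w == size u + size v) &&
  [exists eu : {ffun 'I_(size u) -> 'I_(size w)},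
   exists ev : {ffun 'I_(size v) -> 'I_(size w)},
    [&& is_embedding w u eu, is_embedding w v ev,
        [forall i, forall j, eu i != ev j] &
        [forall k : 'I_(size w), [exists i, eu i == k] || [exists j, ev j == k]]]].

Definition complements (w u : seq T) : {set (size w - size u).-tuple T} :=
  [set v : (size w - size u).-tuple T | in_shuffle w u v ].

End Words.

From mathcomp Require Import all_boot.

Set Implicit Arguments.
Unset Strict Implicit.
Unset Printing Implicit Defensive.

(* Take two distinct embeddings e1, e2 of u in w and the first index i where
   they differ, say p = e1 i < e2 i.  Moving the i-th letter of e2 to p gives
   a third embedding e.  The complements left by e2 and by e agree before p;
   there the complement of e2 reads w[p], while e hits p but not p + 1 (its
   later letters lie beyond e2 i > p), so its complement reads w[p + 1].
   Square-freeness gives w[p] <> w[p + 1], hence two distinct complements. *)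
Lemma count_enum (T : finType) (P : pred T) : count P (enum T) = #|P|.
Proof. by rewrite cardE size_filter enumT. Qed.

Lemma nth_mask (T : Type) (x0 : T) (b : bitseq) (s : seq T) j :
  j < size (mask b s) ->
  nth x0 (mask b s) j = nth x0 s (nth 0 (mask b (iota 0 (size s))) j).
Proof.
have Ds : s = map (nth x0 s) (iota 0 (size s)) by rewrite -/(mkseq _ _) mkseq_nth.
by rewrite {1 2}Ds -map_mask size_map => lt_j; rewrite (nth_map 0).
Qed.

Lemma mask_neq (T : eqType) (s s' : seq T) (b b' : bitseq) p x y :
  size b = size s -> size b' = size s ->
  (forall k, k < p -> nth false b k = nth false b' k) ->
  nth false b p -> ~~ nth false b' p -> nth false b' p.+1 ->
  drop p s = x :: y :: s' -> x != y -> mask b s != mask b' s.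
Proof.
move=> sz_b sz_b' agree b_p b'_p b'_p1 Ds neq_xy.
have lt_p : p.+1 < size s.
  have : 1 < size (drop p s) by rewrite Ds.
  by rewrite size_drop ltn_subRL addn1.
have le_s : p <= size s := ltnW (ltnW lt_p).
have Db : drop p b = true :: drop p.+1 b.
  by rewrite (drop_nth false) ?b_p // sz_b ltnW.
have Db' : drop p b' = false :: true :: drop p.+2 b'.
  rewrite (drop_nth false) ?sz_b' 1?ltnW // (drop_nth false) ?sz_b' //.
  by rewrite (negbTE b'_p) b'_p1.
have Etake : take p b = take p b'.
  apply: (@eq_from_nth _ false) => [|k]; first by rewrite !size_takel ?sz_b ?sz_b'.
  by rewrite size_takel ?sz_b // => lt_k; rewrite !nth_take // agree.
rewrite -(cat_take_drop p b) -(cat_take_drop p b') -(cat_take_drop p s).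
rewrite !mask_cat ?size_takel ?sz_b ?sz_b' //.
by rewrite Db Db' Ds Etake eqseq_cat // eqxx /= eqseq_cons (negbTE neq_xy).
Qed.

Lemma square_free_drop (T : finType) (w s : seq T) p x y :
  square_free w -> drop p w = x :: y :: s -> x != y.
Proof.
move=> sq_free Dw; apply/eqP => Exy; subst y.
suff /sq_free : w = take p w ++ [:: x] ++ [:: x] ++ s by [].
by rewrite -{1}(cat_take_drop p w) Dw.
Qed.

Lemma first_difference (m : nat) (rT : eqType) (f g : {ffun 'I_m -> rT}) :
  f != g -> exists2 i : 'I_m, (forall k : 'I_m, k < i -> f k = g k) & f i != g i.
Proof.
move=> neq_fg; have [i0 neq_i0] : exists i, f i != g i.
  apply/existsP; apply: contraNT neq_fg => /existsPn eq_fg.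
  by apply/eqP/ffunP => i; apply/eqP/negPn.
case: (@arg_minnP _ _ (fun i => f i != g i) val neq_i0) => i neq_i min_i.
exists i => // k lt_ki.
by apply/eqP; apply: contraTT lt_ki => /min_i; rewrite leqNgt.
Qed.

Section Images.
Variables m n : nat.
Implicit Type f : 'I_m -> 'I_n.

Definition in_image f : pred nat := fun k => [exists l, f l == k :> nat].
Definition gap_mask f : bitseq := [seq ~~ in_image f k | k <- iota 0 n].
Definition gaps f : seq nat := [seq k <- iota 0 n | ~~ in_image f k].

Lemma in_image_f f l : in_image f (f l).
Proof. by apply/existsP; exists l. Qed.

Lemma size_gap_mask f : size (gap_mask f) = n.
Proof. by rewrite size_map size_iota. Qed.

Lemma nth_gap_mask f k : k < n -> nth false (gap_mask f) k = ~~ in_image f k.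
Proof. by move=> lt_kn; rewrite (nth_map 0) ?size_iota // nth_iota. Qed.

Lemma gapsE f : gaps f = mask (gap_mask f) (iota 0 n).
Proof. exact: filter_mask. Qed.

Lemma mem_gaps f k : (k \in gaps f) = (k < n) && ~~ in_image f k.
Proof. by rewrite mem_filter mem_iota andbC. Qed.

Lemma size_gaps f : injective f -> size (gaps f) = n - m.
Proof.
move=> inj_f; have count_image : count (in_image f) (iota 0 n) = m.
  rewrite -val_enum_ord count_map count_enum -[RHS](card_ord m) -(card_codom inj_f).
  apply: eq_card => k /=; apply/existsP/codomP => [[l /eqP/val_inj <-] | [l ->]]; by exists l.
have := count_predC (in_image f) (iota 0 n).
by rewrite size_iota count_image size_filter => /(canRL (addKn m)).
Qed.

End Images.

Lemma strict_mono_inj m n (f : 'I_m -> 'I_n) : {homo f : i j / i < j} -> injective f.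
Proof.
move=> mono_f i j eq_f; apply/val_inj.
by case: (ltngtP i j) => // /mono_f; rewrite eq_f ltnn.
Qed.

Section Redirect.
Variables (m n : nat) (f g : 'I_m -> 'I_n) (i : 'I_m).
Hypotheses (mono_f : {homo f : a b / a < b}) (mono_g : {homo g : a b / a < b}).
Hypothesis agree : forall l, l != i -> g l = f l.
Hypothesis lt_gf : g i < f i.

Lemma in_image_redirect (k : nat) : k != g i -> k != f i -> in_image f k = in_image g k.
Proof.
move=> ne_g ne_f; apply/existsP/existsP => -[l /eqP eq_l]; exists l; apply/eqP.
- have ne_li : l != i by apply: contraNneq ne_f => eq_li; rewrite -eq_l eq_li.
  by rewrite agree.
- have ne_li : l != i by apply: contraNneq ne_g => eq_li; rewrite -eq_l eq_li.
  by rewrite -agree.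
Qed.

Lemma notin_image_redirected : ~~ in_image f (g i).
Proof.
apply/existsP => -[l /eqP eq_l].
have ne_li : l != i by apply: contraTneq lt_gf => eq_li; rewrite -eq_l eq_li ltnn.
have eq_gl : g l = g i by apply: val_inj; rewrite /= agree.
by rewrite (strict_mono_inj mono_g eq_gl) eqxx in ne_li.
Qed.

Lemma notin_image_redirect_succ : ~~ in_image g (g i).+1.
Proof.
apply/existsP => -[l /eqP eq_l]; case: (ltngtP l i) => [lt_li | lt_il | eq_li].
- by have := mono_g lt_li; rewrite eq_l ltnNge leqnSn.
- have ne_li : l != i by apply: contraTneq lt_il => ->; rewrite ltnn.
  by have := mono_f lt_il; rewrite -(agree ne_li) eq_l ltnS leqNgt lt_gf.
- by move/val_inj: eq_li eq_l => -> /n_Sn.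
Qed.

End Redirect.

Section Embeddings.
Variable T : finType.
Implicit Types w u : seq T.

Lemma is_embeddingP w u (e : {ffun 'I_(size u) -> 'I_(size w)}) :
  reflect ({homo e : i j / i < j} /\
           forall i : 'I_(size u), nth None (map Some u) i = nth None (map Some w) (e i))
          (is_embedding e).
Proof.
apply: (iffP andP) => [[/forallP mono /forallP letters] | [mono letters]]; split.
- by move=> i j; move/forallP/(_ j)/implyP: (mono i).
- by move=> i; apply/eqP: (letters i).
- by apply/forallP => i; apply/forallP => j; apply/implyP => /mono.
- by apply/forallP => i; apply/eqP.
Qed.

Section OneEmbedding.
Variables (w u : seq T) (e : {ffun 'I_(size u) -> 'I_(size w)}).
Hypothesis emb_e : is_embedding e.

Lemma embedding_mono : {homo e : i j / i < j}.
Proof. by case/is_embeddingP: emb_e. Qed.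

Lemma embedding_nth (i : 'I_(size u)) : nth None (map Some u) i = nth None (map Some w) (e i).
Proof. by case/is_embeddingP: emb_e. Qed.

Lemma embedding_inj : injective e.
Proof. exact: strict_mono_inj embedding_mono. Qed.

End OneEmbedding.

Definition gap_word w m (f : 'I_m -> 'I_(size w)) : seq T := mask (gap_mask f) w.

Section GapWord.
Variables (w : seq T) (m : nat) (f : 'I_m -> 'I_(size w)).

Lemma size_gap_word : size (gap_word f) = size (gaps f).
Proof. by rewrite gapsE !size_mask ?size_gap_mask ?size_iota. Qed.

Lemma mem_nth_gaps (j : 'I_(size (gap_word f))) : nth 0 (gaps f) j \in gaps f.
Proof. by rewrite mem_nth // -size_gap_word. Qed.

Lemma nth_gaps_lt (j : 'I_(size (gap_word f))) : nth 0 (gaps f) j < size w.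
Proof. by have := mem_nth_gaps j; rewrite mem_gaps => /andP[]. Qed.

Definition gap_embedding : {ffun 'I_(size (gap_word f)) -> 'I_(size w)} :=
  [ffun j => Ordinal (nth_gaps_lt j)].

Lemma gap_embeddingP : is_embedding gap_embedding.
Proof.
apply/is_embeddingP; split => [i j lt_ij | j]; rewrite !ffunE /=.
- have sorted_gaps : sorted ltn (gaps f).
    exact/sorted_filter/iota_ltn_sorted/ltn_trans.
  by apply: (sorted_ltn_nth ltn_trans 0 sorted_gaps); rewrite // inE -size_gap_word.
- rewrite /gap_word map_mask nth_mask; first by rewrite size_map gapsE.
  by rewrite -map_mask size_map.
Qed.

Lemma gap_embedding_notin_image j : ~~ in_image f (gap_embedding j).
Proof. by have := mem_nth_gaps j; rewrite mem_gaps ffunE => /andP[]. Qed.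

End GapWord.

Lemma in_shuffle_gap_word w u (e : {ffun 'I_(size u) -> 'I_(size w)}) :
  is_embedding e -> in_shuffle w u (gap_word e).
Proof.
move=> emb_e; have inj_e := embedding_inj emb_e.
have le_uw : size u <= size w by have := leq_card _ inj_e; rewrite !card_ord.
apply/andP; split; first by rewrite size_gap_word size_gaps // subnKC.
apply/existsP; exists e; apply/existsP; exists (gap_embedding e).
apply/and4P; split; [exact: emb_e | exact: gap_embeddingP | |].
- apply/forallP => i; apply/forallP => j.
  by apply: contraTneq (in_image_f e i) => ->; apply: gap_embedding_notin_image.
- apply/forallP => k; case: (boolP (in_image e k)) => [/existsP[l /eqP eq_l] | gap_k].
    by apply/orP; left; apply/existsP; exists l; apply/eqP/val_inj.
  have k_gap : val k \in gaps e by rewrite mem_gaps ltn_ord gap_k.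
  have lt_k : index (val k) (gaps e) < size (gap_word e) by rewrite size_gap_word index_mem.
  apply/orP; right; apply/existsP; exists (Ordinal lt_k); apply/eqP/val_inj.
  by rewrite ffunE /= nth_index.
Qed.

Definition splice m n (f g : 'I_m -> 'I_n) (i : 'I_m) : {ffun 'I_m -> 'I_n} :=
  [ffun l => if l == i then f i else g l].

Section TwoEmbeddings.
Variables (w u : seq T) (e1 e2 : {ffun 'I_(size u) -> 'I_(size w)}) (i : 'I_(size u)).
Hypotheses (emb1 : is_embedding e1) (emb2 : is_embedding e2).
Hypothesis agree : forall k : 'I_(size u), k < i -> e1 k = e2 k.
Hypothesis lt_i : e1 i < e2 i.

Lemma splice_embedding : is_embedding (splice e1 e2 i).
Proof.
apply/is_embeddingP; split => [a b lt_ab | a]; rewrite !ffunE.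
- case: (eqVneq a i) => [eq_ai | ne_ai]; case: (eqVneq b i) => [eq_bi | ne_bi].
  + by move: lt_ab; rewrite eq_ai eq_bi ltnn.
  + by apply: ltn_trans lt_i _; apply: (embedding_mono emb2); rewrite -eq_ai.
  + have lt_ai : a < i by rewrite -eq_bi.
    by rewrite -agree //; apply: (embedding_mono emb1).
  + exact: (embedding_mono emb2).
- by case: eqVneq => [->|_]; apply: embedding_nth.
Qed.

Lemma gap_word_splice_neq : square_free w -> gap_word e2 != gap_word (splice e1 e2 i).
Proof.
move=> sq_free; set g := splice e1 e2 i.
have g_i : g i = e1 i by rewrite ffunE eqxx.
have agree_g l : l != i -> g l = e2 l by move=> ne_li; rewrite ffunE (negbTE ne_li).
have lt_g : g i < e2 i by rewrite g_i.
have mono_e2 := embedding_mono emb2; have mono_g := embedding_mono splice_embedding.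
have lt_p1 : (e1 i).+1 < size w := leq_ltn_trans lt_i (ltn_ord _).
have : 1 < size (drop (e1 i) w) by rewrite size_drop ltn_subRL addn1.
case Dw: (drop (e1 i) w) => [|x [|y s]] // _.
apply: (mask_neq _ _ _ _ _ _ Dw (square_free_drop sq_free Dw)); rewrite ?size_gap_mask //.
- move=> k lt_kp; rewrite !nth_gap_mask ?(ltn_trans lt_kp) ?(ltn_trans _ lt_p1) //.
  rewrite (in_image_redirect agree_g) ?g_i ?ltn_eqF //; exact: ltn_trans lt_kp lt_i.
- by rewrite nth_gap_mask ?(ltnW lt_p1) // -g_i (notin_image_redirected mono_g agree_g lt_g).
- by rewrite nth_gap_mask ?(ltnW lt_p1) // -g_i in_image_f.
- by rewrite nth_gap_mask // -g_i (notin_image_redirect_succ mono_e2 mono_g agree_g lt_g).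
Qed.

End TwoEmbeddings.

Lemma gap_word_in_complements w u (e : {ffun 'I_(size u) -> 'I_(size w)}) :
  is_embedding e ->
  exists2 t : (size w - size u).-tuple T, t \in complements w u & val t = gap_word e.
Proof.
move=> emb_e; have sz_e : size (gap_word e) == size w - size u.
  by rewrite size_gap_word (size_gaps (embedding_inj emb_e)).
by exists (Tuple sz_e); rewrite // inE; apply: in_shuffle_gap_word.
Qed.

Lemma complements_gt1 w u (e1 e2 : {ffun 'I_(size u) -> 'I_(size w)}) (i : 'I_(size u)) :
  square_free w -> is_embedding e1 -> is_embedding e2 ->
  (forall k : 'I_(size u), k < i -> e1 k = e2 k) -> e1 i < e2 i ->
  1 < #|complements w u|.
Proof.
move=> sq_free emb1 emb2 agree lt_i.
have [t2 t2_in val_t2] := gap_word_in_complements emb2.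
have [t t_in val_t] := gap_word_in_complements (splice_embedding emb1 emb2 agree lt_i).
apply/card_gt1P; exists t2, t; split => //.
apply: contraNneq (gap_word_splice_neq emb1 emb2 agree lt_i sq_free) => eq_t.
by rewrite -val_t2 -val_t eq_t.
Qed.

End Embeddings.

Theorem lemma29 (T : finType) (w u : seq T) :
  square_free w ->
  scattered_factor u w ->
  2 <= #|embeddings w u| ->
  1 < #|complements w u|.
Proof.
(* The scattered-factor hypothesis is implied by the existence of an embedding. *)
move=> sq_free _ /card_gt1P[e1 [e2 [emb1 emb2 neq_e]]]; rewrite !inE in emb1 emb2.
have [i agree neq_i] := first_difference neq_e.
have [lt_i | lt_i | /val_inj eq_i] := ltngtP (e1 i) (e2 i).
- exact: complements_gt1 sq_free emb1 emb2 agree lt_i.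
- by apply: complements_gt1 sq_free emb2 emb1 _ lt_i => k /agree.
- by rewrite eq_i eqxx in neq_i.
Qed.
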